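(* Let $G$ and $G_0$ be connected graphs such that $G$ is a cactus and $G_0$ is a subgraph of $G$ that is either a cactus or a cycle. Then there exist sequences $(P_1,\dots,P_r)$ and $(G_0,G_1,\dots,G_r)$ of subgraphs of $G$ ($r\ge 0$, with $r=0$ iff $G=G_0$) such that $G_r=G$, every $G_i$ with $i\ge1$ is a cactus, and for every $i\in\{1,\dots,r\}$: $G_i=G_{i-1}\cup P_i$ with $E(P_i)\cap E(G_{i-1})=\emptyset$, where $P_i$ is a path, a cycle, or a lollipop, and (p) if $P_i$ is a path then $V(G_{i-1})\cap V(P_i)=End(P_i)$; (l) if $P_i$ is a lollipop then $V(G_{i-1})\cap V(P_i)=End(P_i)$; (c) if $P_i$ is a cycle then $|V(G_{i-1})\cap V(P_i)|=1$. Consequently $G_{i-1}$ is a proper subgraph of $G_i$ and $\Delta G_i-\Delta G_{i-1}=1$ for all $i$.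
   Context: Graphs are finite, may have loops and parallel edges, and have no isolated vertices unless stated otherwise. A leaf is a vertex incident to exactly one edge, which is not a loop. $\Delta G=|E(G)|-|V(G)|$. A cycle is a connected graph all of whose vertices have degree 2 (a loop contributes 2; a single vertex with a loop is a cycle). An $(x,y)$-path is a path with distinct end vertices $x,y$ and at least one edge, and $End(P)=\{x,y\}$. A lollipop is a graph obtained from a cycle $C$ (possibly a loop) and a vertex-disjoint path $P$ with end vertices $y,x$ by identifying a vertex of $C$ with $y$; its end-vertex is $x$, and $End(Q)=\{x\}$. A cacti-graph is a graph with no isolated vertices, no leaves, and no component that is a cycle (equivalently, no isolated vertices, no leaves, and every component contains at least two cycles). A cactus is a connected cacti-graph (this is not the standard meaning of ''cactus''). *)

(* Finite multigraphs (loops and parallel edges allowed).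
   An ambient multigraph is given by a vertex type T : finType, an edge type
   ET : finType and an endpoint map ends : ET -> T * T (unordered: an edge e
   joins u and v iff ends e = (u,v) or (v,u); it is a loop iff both ends are
   equal). *)
From HB Require Import structures.
From mathcomp Require Import all_boot.
Set Implicit Arguments. Unset Strict Implicit. Unset Printing Implicit Defensive.

Section Graphs.
Variables (T ET : finType) (ends : ET -> T * T).

Definition graph := ({set T} * {set ET})%type.
Definition gV (H : graph) : {set T} := H.1.
Definition gE (H : graph) : {set ET} := H.2.

Definition is_graph (H : graph) : Prop :=
  forall e, e \in gE H -> ((ends e).1 \in gV H) /\ ((ends e).2 \in gV H).

Definition subgraph (H G : graph) : Prop :=
  is_graph H /\ gV H \subset gV G /\ gE H \subset gE G.

Definition gunion (A B : graph) : graph := (gV A :|: gV B, gE A :|: gE B).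

Definition joins (e : ET) (u v : T) : bool :=
  (ends e == (u, v)) || (ends e == (v, u)).

(* degree; a loop contributes 2 *)
Definition deg (H : graph) (v : T) : nat :=
  \sum_(e in gE H) (((ends e).1 == v) + ((ends e).2 == v)).

Definition adj (H : graph) : rel T :=
  fun u v => [exists e in gE H, joins e u v].

Definition connected (H : graph) : Prop :=
  is_graph H /\ gV H != set0 /\
  forall u v, u \in gV H -> v \in gV H -> connect (adj H) u v.

Definition is_cycle (H : graph) : Prop :=
  connected H /\ forall v, v \in gV H -> deg H v = 2.

(* (x,y)-path: distinct vertices v_0 = x, ..., v_k = y (k >= 1) and distinct
   edges e_1..e_k with e_i joining v_{i-1} and v_i; H consists exactly of them *)
Definition is_path (H : graph) (x y : T) : Prop :=
  exists (vs : seq T) (es : seq ET),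
    [/\ uniq vs, uniq es, size vs = (size es).+1 & 0 < size es] /\
    [/\ head x vs = x, last x vs = y,
        all (fun t => joins t.1 t.2.1 t.2.2) (zip es (zip vs (behead vs))),
        gV H = [set v in vs] & gE H = [set e in es]].

Definition is_lollipop (H : graph) (x : T) : Prop :=
  exists (C P : graph) (y : T),
    [/\ is_cycle C, is_path P y x, gV C :&: gV P = [set y],
        gE C :&: gE P = set0 & H = gunion C P].

Definition isolated (H : graph) (v : T) : bool := deg H v == 0.
(* exactly one incident edge, not a loop  <=>  degree 1 *)
Definition leaf (H : graph) (v : T) : bool := deg H v == 1.

Definition component (H : graph) (v : T) : graph :=
  let S := [set u in gV H | connect (adj H) v u] in
  (S, [set e in gE H | ((ends e).1 \in S) && ((ends e).2 \in S)]).

Definition cacti_graph (H : graph) : Prop :=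
  [/\ is_graph H,
      (forall v, v \in gV H -> ~~ isolated H v),
      (forall v, v \in gV H -> ~~ leaf H v) &
      (forall v, v \in gV H -> ~ is_cycle (component H v))].

Definition cactus (H : graph) : Prop := connected H /\ cacti_graph H.

End Graphs.

From HB Require Import structures.
From mathcomp Require Import all_boot zify.
Set Implicit Arguments. Unset Strict Implicit. Unset Printing Implicit Defensive.

(* Grow G0 inside G while keeping a connected subgraph H of minimum degree 2.
   If H <> G, some edge of G outside H has an end u in H.  Walk from u along
   unused edges of G outside H: every vertex of G has degree at least 2, so the
   walk can be continued until it first returns to H or to itself, and that
   return closes off a path, a cycle or a lollipop P.  Then H :|: P is again
   connected of minimum degree 2, with exactly one more edge than vertex added;
   since minimum degree 2 already forces |V| <= |E|, the new graph has |V| < |E|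
   and so is a cactus, because a cycle has |V| = |E|.  The number of edges of G
   outside H decreases, so the process reaches G. *)

Section EarDecomposition.
Variables (T ET : finType) (ends : ET -> T * T).
Implicit Types (G H P C : graph T ET) (e f : ET) (es : seq ET) (s : seq T).

Definition ends_at e (v : T) : nat := ((ends e).1 == v) + ((ends e).2 == v).

Definition mindeg2 H := forall v, v \in gV H -> 1 < deg ends H v.

Lemma joins_sym e a b : joins ends e a b = joins ends e b a.
Proof. by rewrite /joins orbC. Qed.

Lemma ends_at_joins e a b v : joins ends e a b -> ends_at e v = (a == v) + (b == v).
Proof. by rewrite /ends_at /joins => /orP [] /eqP -> /=; rewrite // addnC. Qed.

Lemma ends_at_eq0 e v : (ends_at e v == 0) = ((ends e).1 != v) && ((ends e).2 != v).
Proof. by rewrite /ends_at addn_eq0 !eqb0. Qed.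

Lemma joins_ends_in (A : {set T}) e a b : joins ends e a b ->
  ((ends e).1 \in A) && ((ends e).2 \in A) = (a \in A) && (b \in A).
Proof. by rewrite /joins => /orP [] /eqP -> //=; rewrite andbC. Qed.

Lemma leq_deg H1 H2 v : gE H1 \subset gE H2 -> deg ends H1 v <= deg ends H2 v.
Proof.
move=> sE; rewrite /deg [X in X <= _]big_mkcond [X in _ <= X]big_mkcond /=.
by apply: leq_sum => e _; case: ifP => // /(subsetP sE) ->.
Qed.

Lemma deg_notin H v : is_graph ends H -> v \notin gV H -> deg ends H v = 0.
Proof.
move=> gH vH; apply/eqP; rewrite sum_nat_eq0; apply/forall_inP => e /gH [h1 h2].
by rewrite -/(ends_at e v) ends_at_eq0; apply/andP; split; apply: contraNneq vH => <-.
Qed.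

Lemma deg_gt0_incident H v : 0 < deg ends H v ->
  exists2 e, e \in gE H & ((ends e).1 == v) || ((ends e).2 == v).
Proof.
rewrite lt0n sum_nat_eq0 => /forall_inPn [e eH]; rewrite -/(ends_at e v) ends_at_eq0.
by rewrite negb_and !negbK; exists e.
Qed.

Lemma handshake H : \sum_(v : T) deg ends H v = 2 * #|gE H|.
Proof.
have one a : \sum_(v : T) ((a == v) : nat) = 1.
  by rewrite (bigD1 a) //= eqxx big1 // => v; rewrite eq_sym => /negbTE ->.
rewrite exchange_big /= mulnC -sum_nat_const; apply: eq_bigr => e _.
by rewrite big_split /= !one.
Qed.

Lemma mindeg2_card H : mindeg2 H -> #|gV H| <= #|gE H|.
Proof.
move=> dH; rewrite -(leq_pmul2l (isT : 0 < 2)) -handshake -sum1_card big_distrr /=.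
rewrite [X in _ <= X](bigID (mem (gV H))) /= -[X in X <= _]addn0 leq_add //.
by apply: leq_sum => v /dH; rewrite muln1.
Qed.

Lemma cycle_card C : is_cycle ends C -> #|gE C| = #|gV C|.
Proof.
move=> [[gC _] dC]; apply/eqP; rewrite -(eqn_pmul2l (isT : 0 < 2)) -handshake.
rewrite (bigID (mem (gV C))) /= [X in _ + X]big1 => [|v vC]; last exact: deg_notin.
by rewrite addn0 -sum1_card big_distrr /=; apply/eqP/eq_bigr => v /dC ->.
Qed.

Definition joins_triple (t : ET * (T * T)) : bool := joins ends t.1 t.2.1 t.2.2.

Definition trail es s : bool := all joins_triple (zip es (zip s (behead s))).

Lemma trail_cons f es x y s :
  trail (f :: es) [:: x, y & s] = joins ends f x y && trail es (y :: s).
Proof. by []. Qed.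

Lemma trail_cons_rcons f es x c z :
  trail (f :: es) (x :: rcons c z) = joins ends f x (head z c) && trail es (rcons c z).
Proof. by case: c. Qed.

Lemma trail_cat es c z d : size es = size c + size d ->
  trail es (c ++ z :: d) =
  trail (take (size c) es) (rcons c z) && trail (drop (size c) es) (z :: d).
Proof.
elim: c es => [|x c IH] [|f es] //= [sz].
case: c IH sz => [|y c] IH sz.
  by rewrite take0 drop0 !trail_cons [trail [::] _]/trail andbT.
by rewrite !trail_cons -cat_cons IH // andbA.
Qed.

Lemma sum_ends_at_trail es x s v : size es = size s -> trail es (x :: s) ->
  \sum_(e <- es) ends_at e v = count_mem v (belast x s) + count_mem v s.
Proof.
elim: s x es => [|y s IH] x [|f es] //=; first by rewrite big_nil.
move=> [sz]; rewrite trail_cons => /andP [jf tr].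
by rewrite big_cons (ends_at_joins v jf) (IH y es) //=; lia.
Qed.

Lemma deg_edge_seq P es v : uniq es -> gE P = [set e in es] ->
  deg ends P v = \sum_(e <- es) ends_at e v.
Proof. by move=> ues hE; rewrite /deg hE big_uniq //; apply: eq_bigl => e; rewrite inE. Qed.

Lemma trail_mem es s e : trail es s -> size es < size s -> e \in es ->
  exists a b, [/\ joins ends e a b, a \in s & b \in s].
Proof.
elim: es s => [|f es IH] [|x [|y s]] //; rewrite trail_cons => /andP [jf tr] /= sz.
rewrite inE => /predU1P [->|/(IH (y :: s) tr sz) [a [b [jab aS bS]]]].
  by exists x, y; rewrite jf !inE !eqxx orbT.
by exists a, b; rewrite jab !(in_cons x) aS bS !orbT.
Qed.

Lemma trail_is_graph P es s : trail es s -> size es < size s ->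
  gE P = [set e in es] -> {subset s <= gV P} -> is_graph ends P.
Proof.
move=> tr sz hE sV e; rewrite hE inE => /(trail_mem tr sz) [a [b [jab /sV aP /sV bP]]].
by move: (joins_ends_in (gV P) jab); rewrite aP bP => /andP.
Qed.

Lemma adj_sym P : symmetric (adj ends P).
Proof.
by move=> u v; apply/existsP/existsP => -[e /andP [eP j]]; exists e; rewrite eP joins_sym.
Qed.

Lemma trail_path_adj P es x s : trail es (x :: s) -> size es = size s ->
  {subset es <= gE P} -> path (adj ends P) x s.
Proof.
elim: s x es => [|y s IH] x [|f es] //; rewrite trail_cons => /andP [jf tr] [sz] sE /=.
rewrite (IH y es) // => [|g g_es]; last by apply: sE; rewrite inE g_es orbT.
by rewrite andbT; apply/existsP; exists f; rewrite jf sE ?mem_head.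
Qed.

Lemma path_connected P x s : is_graph ends P -> x \in gV P -> {subset gV P <= x :: s} ->
  path (adj ends P) x s -> connected ends P.
Proof.
move=> gP xP sP pth; split=> //; split=> [|u v /sP uS /sP vS]; first by apply/set0Pn; exists x.
apply: connect_trans (path_connect pth vS).
by rewrite (sym_connect_sym (@adj_sym P)) (path_connect pth uS).
Qed.

Lemma connect_adj_sub P1 P2 u w : gE P1 \subset gE P2 ->
  connect (adj ends P1) u w -> connect (adj ends P2) u w.
Proof.
move=> sE; apply: connect_sub => a b /existsP [e /andP [eP j]].
by apply: connect1; apply/existsP; exists e; rewrite (subsetP sE e eP).
Qed.

Lemma gV_gunion P1 P2 : gV (gunion P1 P2) = gV P1 :|: gV P2. Proof. by []. Qed.
Lemma gE_gunion P1 P2 : gE (gunion P1 P2) = gE P1 :|: gE P2. Proof. by []. Qed.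

Lemma connected_gunion P1 P2 : connected ends P1 -> connected ends P2 ->
  gV P1 :&: gV P2 != set0 -> connected ends (gunion P1 P2).
Proof.
move=> [g1 [_ c1]] [g2 [_ c2]] /set0Pn [y]; rewrite inE => /andP [y1 y2].
have gU : is_graph ends (gunion P1 P2).
  by move=> e; rewrite !inE => /orP [/g1|/g2] [-> ->]; rewrite ?orbT.
have cy u : u \in gV (gunion P1 P2) -> connect (adj ends (gunion P1 P2)) y u.
  rewrite inE => /orP [uP|uP].
    by apply: (@connect_adj_sub P1) (c1 _ _ y1 uP); apply: subsetUl.
  by apply: (@connect_adj_sub P2) (c2 _ _ y2 uP); apply: subsetUr.
split=> //; split=> [|u v uU vU]; first by apply/set0Pn; exists y; rewrite inE y1.
by apply: connect_trans (cy v vU); rewrite (sym_connect_sym (@adj_sym _)) cy.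
Qed.

Lemma is_path_facts P x y : is_path ends P x y ->
  [/\ x != y, #|gV P| = (#|gE P|).+1, connected ends P, x \in gV P /\ y \in gV P &
      forall v, v \in gV P -> v != x -> v != y -> 1 < deg ends P v].
Proof.
case=> vs [es [[uvs ues sz es_gt0] [hh hl tr hV hE]]].
case: vs hh uvs sz hl tr hV => [|x0 s] //= -> uvs [sz] hl tr hV.
have xP : x \in gV P by rewrite hV inE mem_head.
have yP : y \in gV P by rewrite hV inE -hl mem_last.
have ys : y \in s.
  case: s sz {uvs tr hV} => [|b s] sz in hl *; first by rewrite -sz in es_gt0.
  by rewrite -hl /= mem_last.
have xy : x != y by apply: contraTneq ys => <-; case/andP: uvs.
have gP : is_graph ends P.
  by apply: (trail_is_graph tr _ hE) => [|v]; rewrite /= ?sz // hV inE.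
split=> //.
- by rewrite hV hE !cardsE !(card_uniqP _) //= sz.
- apply: (path_connected (s := s) gP xP); first by move=> v; rewrite hV inE.
  by apply: (trail_path_adj tr (esym sz)) => e; rewrite hE inE.
move=> v; rewrite hV inE in_cons => /predU1P [->|vs]; first by rewrite eqxx.
move=> _ vy; rewrite (deg_edge_seq v ues hE) (sum_ends_at_trail v (esym sz) tr).
have vb : v \in belast x s.
  have : v \in x :: s by rewrite in_cons vs orbT.
  by rewrite lastI mem_rcons in_cons hl (negbTE vy).
by rewrite -!has_pred1 !has_count in vs vb; lia.
Qed.

Lemma closed_trail_cycle C es x t : uniq (x :: t) -> uniq es -> size es = (size t).+1 ->
  trail es (x :: rcons t x) -> gV C = [set v in x :: t] -> gE C = [set e in es] ->
  is_cycle ends C.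
Proof.
move=> ut ues sz tr hV hE.
have memV v : (v \in gV C) = (v \in x :: rcons t x).
  by rewrite hV inE !in_cons mem_rcons in_cons orbA orbb.
have gC : is_graph ends C.
  by apply: (trail_is_graph tr _ hE) => [|v]; rewrite ?memV //= size_rcons sz.
have xC : x \in gV C by rewrite memV mem_head.
split.
  apply: (path_connected (s := rcons t x) gC xC) => [v|]; first by rewrite memV.
  by apply: (trail_path_adj tr) => [|e]; rewrite ?size_rcons // hE inE.
move=> v vC; rewrite (deg_edge_seq v ues hE) (sum_ends_at_trail v _ tr) ?size_rcons //.
have -> : count_mem v (rcons t x) = count_mem v (x :: t).
  by rewrite -cats1 count_cat /= addn0 addnC.
by rewrite belast_rcons count_uniq_mem //; move: vC; rewrite hV inE => ->.
Qed.

Lemma is_lollipop_facts P x : is_lollipop ends P x ->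
  [/\ #|gE P| = #|gV P|, connected ends P, x \in gV P &
      forall v, v \in gV P -> v != x -> 1 < deg ends P v].
Proof.
case=> C [Q [y [cC pQ hV hE ->]]].
have [_ cardQ cQ [yQ xQ] dQ] := is_path_facts pQ.
have yC : y \in gV C by move/setP/(_ y): hV; rewrite !inE eqxx => /andP [].
have cardE := cardsUI (gE C) (gE Q); rewrite hE cards0 in cardE.
have cardV := cardsUI (gV C) (gV Q); rewrite hV cards1 in cardV.
have dC v : v \in gV C -> 1 < deg ends (gunion C Q) v.
  by move=> vC; case: cC => _ /(_ v vC) <-; apply: leq_deg; apply: subsetUl.
split.
- by rewrite gE_gunion gV_gunion (cycle_card cC) in cardE *; lia.
- by apply: connected_gunion; [case: cC | | rewrite hV; apply/set0Pn; exists y; rewrite inE].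
- by rewrite gV_gunion inE xQ orbT.
move=> v; rewrite gV_gunion inE; case: (boolP (v \in gV C)) => [vC _ _|vC /= vQ vx].
  exact: dC.
have vy : v != y by apply: contraNneq vC => ->.
exact: leq_trans (dQ v vQ vy vx) (@leq_deg Q (gunion C Q) v (subsetUr _ _)).
Qed.

Lemma trail_lollipop P f es c z d :
  uniq (c ++ z :: d) -> uniq (f :: es) -> size es = size c + size d -> d != [::] ->
  joins ends f z (head z c) -> trail es (c ++ z :: d) ->
  gV P = [set v in c ++ z :: d] -> gE P = [set e in f :: es] ->
  is_lollipop ends P (last z d).
Proof.
move=> ucd ufes sz dn jf tr hV hE.
set es1 := take (size c) es; set es2 := drop (size c) es.
have es12 : es = es1 ++ es2 by rewrite cat_take_drop.
move: ufes; rewrite /= es12 mem_cat negb_or cat_uniq => /andP [/andP [fes1 fes2]].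
case/and3P=> ues1 dis12 ues2.
move: ucd; rewrite cat_uniq /= negb_or => /and3P [uc /andP [zc discd] /andP [zd ud]].
move: tr; rewrite (trail_cat _ sz) => /andP [tr1 tr2].
have sz1 : size es1 = size c by rewrite size_takel // sz leq_addr.
have sz2 : size es2 = size d by rewrite size_drop sz addKn.
exists ([set v in z :: c], [set e in f :: es1]), ([set v in z :: d], [set e in es2]), z.
split.
- apply: (closed_trail_cycle (es := f :: es1) (x := z) (t := c)) => //;
    rewrite /= ?zc ?ues1 ?fes1 ?sz1 //.
  by rewrite trail_cons_rcons jf.
- exists (z :: d), es2; split; split; rewrite //= ?zd ?sz2 ?lt0n ?size_eq0 //.
- apply/setP => v; rewrite !inE; case: (eqVneq v z) => [->|_]; rewrite ?eqxx //=.
  by apply/negP => /andP [vc vd]; case/hasP: discd; exists v.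
- apply/setP => e; rewrite !inE; apply/negP => /andP [/predU1P [->|e1] e2].
    by rewrite e2 in fes2.
  by case/hasP: dis12; exists e.
case: P hV hE => VP EP /= -> ->; congr pair; apply/setP => x.
  by rewrite !inE mem_cat !in_cons; case: (x == z); rewrite ?orbT.
by rewrite !inE es12 mem_cat orbA.
Qed.

Definition ear H P : Prop :=
  (exists x y, is_path ends P x y /\ gV H :&: gV P = [set x; y])
  \/ (exists x, is_lollipop ends P x /\ gV H :&: gV P = [set x])
  \/ (is_cycle ends P /\ #|gV H :&: gV P| = 1).

Lemma ear_facts H P : ear H P ->
  [/\ connected ends P, gV H :&: gV P != set0,
      #|gE P| + #|gV H :&: gV P| = (#|gV P|).+1 &
      forall v, v \in gV P -> v \notin gV H -> 1 < deg ends P v].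
Proof.
have inH v A : v \in gV H :&: A -> v \in gV H by rewrite inE => /andP [].
case=> [[x [y [pP hI]]]|[[x [lP hI]]|[cP hI]]].
- have [xy cardP cP [xP yP] dP] := is_path_facts pP.
  have xH : x \in gV H by apply: (inH x (gV P)); rewrite hI !inE eqxx.
  have yH : y \in gV H by apply: (inH y (gV P)); rewrite hI !inE eqxx orbT.
  split=> //; first by rewrite hI; apply/set0Pn; exists x; rewrite !inE eqxx.
    by rewrite hI cards2 xy cardP addn2.
  by move=> v vP vH; apply: dP => //; apply: contraNneq vH => ->.
- have [cardP cP xP dP] := is_lollipop_facts lP.
  have xH : x \in gV H by apply: (inH x (gV P)); rewrite hI !inE.
  split=> //; first by rewrite hI; apply/set0Pn; exists x; rewrite !inE.
    by rewrite hI cards1 cardP addn1.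
  by move=> v vP vH; apply: dP => //; apply: contraNneq vH => ->.
- split; first by case: cP.
  + by apply/set0Pn/card_gt0P; rewrite hI.
  + by rewrite hI (cycle_card cP) addn1.
  by move=> v vP _; case: cP => _ /(_ v vP) ->.
Qed.

Lemma ear_gunion_card H P : ear H P -> gE P :&: gE H = set0 ->
  #|gE (gunion H P)| + #|gV H| = (#|gE H| + #|gV (gunion H P)|).+1.
Proof.
move=> /ear_facts [_ _ cardP _] dis.
have cardE := cardsUI (gE H) (gE P); rewrite setIC dis cards0 in cardE.
have cardV := cardsUI (gV H) (gV P).
rewrite gE_gunion gV_gunion; lia.
Qed.

Lemma ear_gunion_mindeg2 H P : mindeg2 H -> ear H P -> mindeg2 (gunion H P).
Proof.
move=> dH /ear_facts [_ _ _ dP] v; rewrite gV_gunion inE.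
case: (boolP (v \in gV H)) => [vH _|vH /= vP].
  exact: leq_trans (dH v vH) (@leq_deg H (gunion H P) v (subsetUl _ _)).
exact: leq_trans (dP v vP vH) (@leq_deg P (gunion H P) v (subsetUr _ _)).
Qed.

Lemma component_connected H v : connected ends H -> v \in gV H -> component ends H v = H.
Proof.
case: H => VH EH [gH [_ cH]] vH; rewrite /component /=.
have -> : [set u in VH | connect (adj ends (VH, EH)) v u] = VH.
  by apply/setP => u; rewrite inE andb_idr // => /(cH _ _ vH).
by congr pair; apply/setP => e; rewrite inE andb_idr // => /gH [-> ->].
Qed.

Lemma mindeg2_cactus H : connected ends H -> mindeg2 H -> #|gV H| < #|gE H| ->
  cactus ends H.
Proof.
move=> cH dH lt; split=> //; split; first by case: cH.
- by move=> v /dH; rewrite /isolated; case: (deg _ _ _).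
- by move=> v /dH; rewrite /leaf; case: (deg _ _ _) => [|[]].
by move=> v vH; rewrite component_connected // => /cycle_card; lia.
Qed.

Definition ear_base G H : Prop := [/\ subgraph ends H G, connected ends H & mindeg2 H].

Definition new_ear G H P : Prop :=
  [/\ ear H P, gE P \subset gE G & gE P :&: gE H = set0].

Lemma vertex_of_deg_gt0 G P v : is_graph ends G -> gE P \subset gE G ->
  0 < deg ends P v -> v \in gV G.
Proof.
move=> gG sE /deg_gt0_incident [e /(subsetP sE) /gG [h1 h2]].
by case/orP => /eqP <-.
Qed.

Lemma ear_base_gunion G H P : is_graph ends G -> ear_base G H -> new_ear G H P ->
  [/\ ear_base G (gunion H P), cactus ends (gunion H P), subgraph ends P G &
      #|gE (gunion H P)| + #|gV H| = (#|gE H| + #|gV (gunion H P)|).+1].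
Proof.
move=> gG [[gH [sVH sEH]] cH dH] [eHP sEP dis].
have cardU := ear_gunion_card eHP dis.
have [cP nI _ dP] := ear_facts eHP.
have cU := connected_gunion cH cP nI.
have sP : subgraph ends P G.
  split; first by case: cP.
  split=> //; apply/subsetP => v vP.
  case: (boolP (v \in gV H)) => [/(subsetP sVH) //|vH].
  by apply: (vertex_of_deg_gt0 gG sEP); apply: ltnW; apply: dP.
have [_ [sVP _]] := sP.
have dU := ear_gunion_mindeg2 dH eHP.
split=> //.
- split=> //; split; first by case: cU.
  by rewrite /= !subUset sVH sVP sEH sEP.
- by apply: mindeg2_cactus => //; have := mindeg2_card dH; lia.
Qed.

Lemma path_exit (A : {set T}) (r : rel T) x p : path r x p -> x \in A ->
  last x p \notin A -> exists a b, [/\ a \in A, b \notin A & r a b].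
Proof.
elim: p x => [|y p IH] x /=; first by move=> _ ->.
case/andP=> rxy pth xA; case: (boolP (y \in A)) => [/(IH y pth) //|yA _].
by exists x, y.
Qed.

Lemma exists_leaving_edge G H : connected ends G -> subgraph ends H G -> gV H != set0 ->
  H <> G -> exists e w u, [/\ e \in gE G, e \notin gE H, u \in gV H & joins ends e w u].
Proof.
move=> [gG [_ cG]] [gH [sV sE]] /set0Pn [x xH] neq.
case: (boolP (gV G \subset gV H)) => [sV'|/subsetPn [t tG tH]].
  have [e eG eH] : exists2 e, e \in gE G & e \notin gE H.
    apply/subsetPn/negP => sE'; apply: neq.
    rewrite [H]surjective_pairing [G]surjective_pairing.
    by congr pair; apply/eqP; rewrite eqEsubset; apply/andP.
  exists e, (ends e).2, (ends e).1; split=> //.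
    by case: (gG e eG) => /(subsetP sV').
  by rewrite /joins -surjective_pairing eqxx orbT.
have /connectP [p pth tp] := cG x t (subsetP sV x xH) tG.
rewrite tp in tH; have [a [b [aH bH /existsP [e /andP [eG jab]]]]] := path_exit pth xH tH.
exists e, b, a; split=> //; last by rewrite joins_sym.
apply: contra bH => /gH [h1 h2].
by move: (joins_ends_in (gV H) jab); rewrite h1 h2 => /esym /andP [].
Qed.

Section Excursion.
Variables (G H : graph T ET).

(* A trail of [G] outside [H], with vertex list [a :: q] read backwards from its
   free end [a] to the vertex [u] where it left [H]. *)
Definition excursion u a q es : Prop :=
  [/\ uniq (a :: q), uniq es, size es = size q & trail es (a :: q)] /\
  [/\ u \in gV H, last a q = u, {in a :: q, forall v, v \in gV H -> v = u},
      {subset es <= gE G} & {in es, forall e, e \notin gE H}].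

Section ExcursionStep.
Variables (u a z : T) (q : seq T) (es : seq ET) (f : ET).
Hypotheses (exc : excursion u a q es) (fG : f \in gE G) (fH : f \notin gE H)
  (fes : f \notin es) (jf : joins ends f z a).

Lemma excursion_new_edges :
  [set e in f :: es] \subset gE G /\ [set e in f :: es] :&: gE H = set0.
Proof.
case: exc => _ [_ _ _ sE nH]; split.
  by apply/subsetP => e; rewrite inE => /predU1P [->|/sE].
apply/setP => e; rewrite !inE; apply/negP => /andP [/predU1P [->|/nH /negP //]].
exact/negP.
Qed.

Lemma excursion_cycle : z = u -> exists P, new_ear G H P.
Proof.
move=> zu; case: exc => [[uaq ues sz tr] [uH hl hVu _ _]].
have [sE dis] := excursion_new_edges.
have aq : rcons (belast a q) u = a :: q by rewrite -hl -lastI.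
exists ([set v in u :: belast a q], [set e in f :: es]); split=> //; right; right.
split.
  apply: (closed_trail_cycle (es := f :: es) (x := u) (t := belast a q)) => //.
  - by rewrite cons_uniq -rcons_uniq aq.
  - by rewrite /= fes.
  - by rewrite /= size_belast sz.
  - by rewrite aq trail_cons -zu jf.
apply/eqP/cards1P; exists u; apply/setP => v.
rewrite in_setI in_set -mem_rcons aq in_set1.
by apply/andP/eqP => [[vH vq]|->]; [exact: hVu | split=> //; rewrite -hl mem_last].
Qed.

Lemma excursion_path : z \in gV H -> z != u -> exists P, new_ear G H P.
Proof.
move=> zH zu; case: exc => [[uaq ues sz tr] [uH hl hVu _ _]].
have [sE dis] := excursion_new_edges.
have zq : z \notin a :: q by apply: contra zu => /hVu /(_ zH) ->.
exists ([set v in z :: a :: q], [set e in f :: es]); split=> //; left; exists z, u.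
split.
  exists (z :: a :: q), (f :: es); split; split=> //.
  - by rewrite cons_uniq zq.
  - by rewrite /= fes.
  - by rewrite /= sz.
  - by rewrite -/(trail _ _) trail_cons jf.
apply/setP => v; rewrite in_setI in_set in_set2 in_cons.
case: (eqVneq v z) => [->|_]; first by rewrite zH.
by apply/andP/eqP => [[vH vq]|->]; [exact: hVu | split=> //; rewrite -hl mem_last].
Qed.

Lemma excursion_lollipop : z \notin gV H -> z \in a :: q -> exists P, new_ear G H P.
Proof.
move=> zH zq; case: exc => [[uaq ues sz tr] [uH hl hVu _ _]].
have [sE dis] := excursion_new_edges.
case/splitPr acd: {1}(a :: q) / zq => [c d].
have szq : size q = size c + size d.
  by move/(congr1 size): acd; rewrite size_cat /= addnS => -[].
have hd : last z d = u by move: hl; rewrite -[last a q]/(last z (a :: q)) acd last_cat.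
have dn : d != [::] by apply: contraNneq zH => d0; move: uH; rewrite -hd d0.
exists ([set v in c ++ z :: d], [set e in f :: es]); split=> //; right; left; exists u.
split.
  rewrite -hd; apply: trail_lollipop => //; rewrite -?acd ?sz //= ?fes //.
  suff -> : head z c = a by [].
  by case: c acd {szq} => [|y c] [-> _].
apply/setP => v; rewrite in_setI in_set -acd in_set1.
by apply/andP/eqP => [[vH vq]|->]; [exact: hVu | split=> //; rewrite -hl mem_last].
Qed.

Lemma excursion_cons : z \notin gV H -> z \notin a :: q ->
  excursion u z (a :: q) (f :: es).
Proof.
move=> zH zq; case: exc => [[uaq ues sz tr] [uH hl hVu sE nH]].
split; split=> //.
- by rewrite cons_uniq zq.
- by rewrite /= fes.
- by rewrite /= sz.
- by rewrite trail_cons jf.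
- by move=> v /predU1P [->|/hVu //]; rewrite (negbTE zH).
- by move=> e /predU1P [->|/sE].
by move=> e /predU1P [->|/nH].
Qed.

End ExcursionStep.

Hypotheses (gG : is_graph ends G) (gH : is_graph ends H) (dG : mindeg2 G).

Lemma excursion_fresh_edge u a q es : excursion u a q es -> a \notin gV H ->
  exists f z, [/\ f \in gE G, f \notin gE H, f \notin es & joins ends f z a].
Proof.
case=> [[uaq ues sz tr] [uH hl _ sE _]] aH.
case: q uaq sz tr hl => [|b q] uaq sz tr /= hl; first by move: aH; rewrite hl uH.
have aG : a \in gV G.
  case: es ues sz tr sE => [|e1 es] // _ _; rewrite trail_cons => /andP [j1 _] sE.
  have [h1 h2] := gG (sE e1 (mem_head _ _)).
  by move: (joins_ends_in (gV G) j1); rewrite h1 h2 => /esym /andP [].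
have once : \sum_(e <- es) ends_at e a = 1.
  move: uaq => /andP [ab _].
  have ab' : a \notin belast b q by apply/negP => /mem_belast; apply/negP.
  by rewrite (sum_ends_at_trail a sz tr) (count_memPn ab) /= eqxx (count_memPn ab').
have [f fG /andP [fes fa]] : exists2 f, f \in gE G & (f \notin es) && (ends_at f a != 0).
  apply/exists_inP; apply: contraTT (dG aG) => /exists_inPn none.
  rewrite /deg (bigID (mem es)) /= [X in _ + X]big1 ?addn0 => [|e /andP [eG ees]].
    have -> : \sum_(e in gE G | e \in es) ends_at e a = \sum_(e <- es) ends_at e a.
      by rewrite big_uniq //; apply: eq_bigl => e; rewrite andb_idl // => /sE.
    by rewrite once.
  by apply/eqP; move: (none e eG); rewrite ees negbK.
have [z jf] : exists z, joins ends f z a.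
  move: fa; rewrite ends_at_eq0 negb_and !negbK /joins => /orP [] /eqP e_a.
    by exists (ends f).2; rewrite -e_a -surjective_pairing eqxx orbT.
  by exists (ends f).1; rewrite -e_a -surjective_pairing eqxx.
exists f, z; split=> //; apply: contra aH => /gH [h1 h2].
by move: (joins_ends_in (gV H) jf); rewrite h1 h2 => /esym /andP [].
Qed.

Lemma excursion_new_ear n u a q es f z : #|T| - size q <= n ->
  excursion u a q es -> f \in gE G -> f \notin gE H -> f \notin es ->
  joins ends f z a -> exists P, new_ear G H P.
Proof.
elim: n a q es f z => [|n IH] a q es f z bound exc fG fH fes jf.
  case: exc => [[/card_uniqP uaq _ _ _] _].
  move: bound; rewrite leqn0 subn_eq0 => /(leq_trans (max_card (mem (a :: q)))).
  by rewrite uaq ltnn.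
case: (boolP (z \in gV H)) => zH.
  case: (eqVneq z u) => [|zu]; first exact: (excursion_cycle exc fG fH fes jf).
  exact: (excursion_path exc fG fH fes jf zH zu).
case: (boolP (z \in a :: q)) => zq; first exact: (excursion_lollipop exc fG fH fes jf zH zq).
have exc' := excursion_cons exc fG fH fes jf zH zq.
have [f' [z' [f'G f'H f'es jf']]] := excursion_fresh_edge exc' zH.
apply: (IH _ _ _ _ _ _ exc' f'G f'H f'es jf').
by move: bound; rewrite [size _]/= subnS; case: (_ - _).
Qed.

End Excursion.

Lemma exists_new_ear G H : connected ends G -> mindeg2 G -> ear_base G H -> H <> G ->
  exists P, new_ear G H P.
Proof.
move=> cG dG [sHG [_ [nH _]] _] neq; have [gH _] := sHG; have [gG _] := cG.
have [e [w [u [eG eH uH jwu]]]] := exists_leaving_edge cG sHG nH neq.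
have exc : excursion G H u u [::] [::] by split; split=> // v /predU1P [->|].
exact: (excursion_new_ear gG gH dG (leq_subr _ _) exc eG eH _ jwu).
Qed.

Definition ear_decomposition G G0 r (P Gs : nat -> graph T ET) : Prop :=
  [/\ Gs 0 = G0, Gs r = G, (r = 0 <-> G = G0),
      (forall i, i <= r -> subgraph ends (Gs i) G) &
      (forall i, 1 <= i <= r ->
         [/\ subgraph ends (P i) G, cactus ends (Gs i), Gs i = gunion (Gs i.-1) (P i) &
             gE (P i) :&: gE (Gs i.-1) = set0] /\
         [/\ ear (Gs i.-1) (P i),
             gV (Gs i.-1) \subset gV (Gs i) /\ gE (Gs i.-1) \subset gE (Gs i)
               /\ Gs i.-1 <> Gs i &
             #|gE (Gs i)| + #|gV (Gs i.-1)| = (#|gE (Gs i.-1)| + #|gV (Gs i)|).+1])].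

Lemma ear_decomposition_cons G H P r Ps Gs : is_graph ends G -> ear_base G H ->
  new_ear G H P -> H <> G -> ear_decomposition G (gunion H P) r Ps Gs ->
  ear_decomposition G H r.+1 (fun i => if i is 1 then P else Ps i.-1)
    (fun i => if i is j.+1 then Gs j else H).
Proof.
move=> gG base nHP neq [Gs0 Gsr _ sGs dec].
have [_ cU sP cardU] := ear_base_gunion gG base nHP.
have [eHP _ dis] := nHP.
split=> //; first by split=> // /esym /neq.
  by case=> [_|i /sGs //]; case: base.
case=> [//|[_|i hi]]; last exact: dec i.+1 hi.
rewrite /= Gs0; split=> //; split=> //.
split; [exact: subsetUl | split; [exact: subsetUl | move=> eq]].
by rewrite -eq in cardU; lia.
Qed.

Lemma cacti_graph_mindeg2 H : cacti_graph ends H -> mindeg2 H.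
Proof.
case=> _ niso nleaf _ v vH; move: (niso v vH) (nleaf v vH).
by rewrite /isolated /leaf; case: (deg _ _ _) => [|[]].
Qed.

Lemma exists_ear_decomposition G H : connected ends G -> mindeg2 G -> ear_base G H ->
  exists r Ps Gs, ear_decomposition G H r Ps Gs.
Proof.
move=> cG dG; have [gG _] := cG.
have [n] := ubnP #|gE G :\: gE H|; elim: n H => // n IH H lt_n base.
have [<-|neq] := eqVneq H G.
  exists 0, (fun _ => H), (fun _ => H); split=> //; last by case.
  by move=> _ _; case: base => -[gH _] _ _; split; rewrite ?subxx.
have [P nHP] := exists_new_ear cG dG base (elimN eqP neq).
have [base' _ _ cardU] := ear_base_gunion gG base nHP.
have [[_ [_ sEH]] _ _] := base; have [[_ [sVU sEU]] _ _] := base'.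
have lt_n' : #|gE G :\: gE (gunion H P)| < n.
  move: lt_n; rewrite !cardsD (setIidPr sEH) (setIidPr sEU).
  have := subset_leq_card sEU; have := subset_leq_card (subsetUl (gV H) (gV P)).
  rewrite -gV_gunion; lia.
have [r [Ps [Gs dec]]] := IH _ lt_n' base'.
by do 3!eexists; apply: ear_decomposition_cons dec => //; apply/eqP.
Qed.

End EarDecomposition.

Theorem mainTheorem3 (T ET : finType) (ends : ET -> T * T)
    (G G0 : graph T ET) :
  connected ends G -> connected ends G0 ->
  cactus ends G -> subgraph ends G0 G ->
  (cactus ends G0 \/ is_cycle ends G0) ->
  exists (r : nat) (P Gs : nat -> graph T ET),
    [/\ Gs 0 = G0, Gs r = G, (r = 0 <-> G = G0),
        (forall i, i <= r -> subgraph ends (Gs i) G) &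
        (forall i, 1 <= i <= r ->
           [/\ subgraph ends (P i) G,
               cactus ends (Gs i),
               Gs i = gunion (Gs i.-1) (P i) &
               gE (P i) :&: gE (Gs i.-1) = set0] /\
           [/\
               (exists x y, is_path ends (P i) x y /\
                    gV (Gs i.-1) :&: gV (P i) = [set x; y])
               \/ (exists x, is_lollipop ends (P i) x /\
                    gV (Gs i.-1) :&: gV (P i) = [set x])
               \/ (is_cycle ends (P i) /\
                    #|gV (Gs i.-1) :&: gV (P i)| = 1),
               (gV (Gs i.-1) \subset gV (Gs i) /\ gE (Gs i.-1) \subset gE (Gs i)
                /\ Gs i.-1 <> Gs i) &
               #|gE (Gs i)| + #|gV (Gs i.-1)| = (#|gE (Gs i.-1)| + #|gV (Gs i)|).+1])].
Proof.
move=> cG cG0 [_ cactiG] sG0G cactus_or_cycle0.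
have dG0 : mindeg2 ends G0.
  by case: cactus_or_cycle0 => [[_ /cacti_graph_mindeg2]|[_ deg2] v /deg2 ->].
have [r [P [Gs dec]]] :=
  exists_ear_decomposition cG (cacti_graph_mindeg2 cactiG) (And3 sG0G cG0 dG0).
by exists r, P, Gs.
Qed.
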